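(* Let $\mathcal{B}$ be the category described in the context, with parameters $\alpha,\beta,\kappa,\kappa'$ and $\theta=\alpha\beta\kappa\kappa'$, and let $u,v\in\mathbb{C}$. For $A,B\in\{X,X^*\}$ and a spectral parameter $z$, let $R_{AB}(z):A\otimes B\to B\otimes A$ be the Baxterized crossings defined in the context (with parameters $u$ in $R_{X^*X}$ and $v$ in $R_{XX^*}$). If $uv=-\theta$, then for every triple $A,B,C\in\{X,X^*\}$ not all equal (the ''mixed'' cases) the Yang–Baxter equation with spectral parameter $$(R_{BC}(w)\otimes\mathrm{id}_A)\circ(\mathrm{id}_B\otimes R_{AC}(zw))\circ(R_{AB}(z)\otimes\mathrm{id}_C)=(\mathrm{id}_C\otimes R_{AB}(z))\circ(R_{AC}(zw)\otimes\mathrm{id}_B)\circ(\mathrm{id}_A\otimes R_{BC}(w))$$ holds as an identity of morphisms $A\otimes B\otimes C\to C\otimes B\otimes A$ depending rationally on $z,w$.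
   Context: $\mathcal{B}$ is the $\mathbb{C}$-linear strict monoidal braided category whose objects are finite tensor words in $X$ and $X^*$, with braiding $c_{A,B}:A\otimes B\to B\otimes A$ and duality morphisms $\mathrm{ev}_{\bullet\circ}:X^*\otimes X\to\mathbf 1$, $\mathrm{ev}_{\circ\bullet}:X\otimes X^*\to\mathbf 1$, $\mathrm{coev}_{\bullet\circ}:\mathbf 1\to X^*\otimes X$, $\mathrm{coev}_{\circ\bullet}:\mathbf 1\to X\otimes X^*$ satisfying the zigzag identities (morphisms are linear combinations of tangles modulo isotopy), subject to: $c_{X,X}^2=-\alpha\beta\,\mathrm{id}+(\alpha+\beta)c_{X,X}$; $c_{X,X^*}\circ\mathrm{coev}_{\circ\bullet}=\kappa\,\mathrm{coev}_{\bullet\circ}$; $c_{X^*,X}\circ\mathrm{coev}_{\bullet\circ}=\kappa'\,\mathrm{coev}_{\circ\bullet}$; $\mathrm{ev}_{\circ\bullet}\circ\mathrm{coev}_{\circ\bullet}=\frac{\theta+1}{\kappa'(\alpha+\beta)}$, $\mathrm{ev}_{\bullet\circ}\circ\mathrm{coev}_{\bullet\circ}=\frac{\theta+1}{\kappa(\alpha+\beta)}$. Baxterized crossings: $R_{XX}(z)=c_{X,X}+\frac{\alpha+\beta}{z-1}\mathrm{id}_{X\otimes X}$, $R_{X^*X^*}(z)=c_{X^*,X^*}+\frac{\alpha+\beta}{z-1}\mathrm{id}_{X^*\otimes X^*}$, $R_{X^*X}(z)=c_{X^*,X}+\frac{\alpha+\beta}{\alpha\beta}\frac{u}{z-u}\,\mathrm{coev}_{\circ\bullet}\circ\mathrm{ev}_{\bullet\circ}$,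 $R_{XX^*}(z)=c_{X,X^*}+\frac{\alpha+\beta}{\alpha\beta}\frac{v}{z-v}\,\mathrm{coev}_{\bullet\circ}\circ\mathrm{ev}_{\circ\bullet}$. *)

From HB Require Import structures.
From mathcomp Require Import all_boot all_algebra.
From mathcomp Require Import complex Rstruct.
Set Implicit Arguments. Unset Strict Implicit. Unset Printing Implicit Defensive.
Import GRing.Theory.
Local Open Scope ring_scope.

Definition CC : fieldType := (Rdefinitions.R)[i].

(* Objects of B: finite tensor words in X and X^*;  true = X,  false = X^*.
   The unit object is [::] and the tensor product of objects is ++. *)
Notation obj := (seq bool).

Record BData := {
  Hom  : obj -> obj -> lmodType CC;
  cmp : forall a b d, Hom b d -> Hom a b -> Hom a d;
  idm  : forall a, Hom a a;
  tens : forall a b a' b', Hom a b -> Hom a' b' -> Hom (a ++ a') (b ++ b');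
  brd  : forall a b, Hom (a ++ b) (b ++ a);
  brdinv : forall a b, Hom (b ++ a) (a ++ b);
  ev_bw   : Hom [:: false; true] [::];
  ev_wb   : Hom [:: true; false] [::];
  coev_bw : Hom [::] [:: false; true];
  coev_wb : Hom [::] [:: true; false]
}.

Arguments cmp {_ _ _ _} _ _.
Arguments tens {_ _ _ _ _} _ _.

Definition castH (D : BData) (a a' b b' : obj) (ea : a = a') (eb : b = b')
    (f : Hom D a b) : Hom D a' b' :=
  eq_rect a (fun x => Hom D x b') (eq_rect b (fun y => Hom D a y) f b' eb) a' ea.

Definition braided_rigid_axioms (D : BData) : Prop :=
  (forall a b (f : Hom D a b), cmp (idm D b) f = f) /\
  (forall a b (f : Hom D a b), cmp f (idm D a) = f) /\
  (forall a b d e (h : Hom D d e) (g : Hom D b d) (f : Hom D a b),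
      cmp h (cmp g f) = cmp (cmp h g) f) /\
  (forall a b d (k : CC) (g g' : Hom D b d) (f : Hom D a b),
      cmp (k *: g + g') f = k *: cmp g f + cmp g' f) /\
  (forall a b d (k : CC) (g : Hom D b d) (f f' : Hom D a b),
      cmp g (k *: f + f') = k *: cmp g f + cmp g f') /\
  (forall a b, tens (idm D a) (idm D b) = idm D (a ++ b)) /\
  (forall a b d a' b' d' (g : Hom D b d) (f : Hom D a b)
          (g' : Hom D b' d') (f' : Hom D a' b'),
      tens (cmp g f) (cmp g' f') = cmp (tens g g') (tens f f')) /\
  (forall a b (f : Hom D a b), tens (idm D [::]) f = f) /\
  (forall a b (f : Hom D a b), castH (cats0 a) (cats0 b) (tens f (idm D [::])) = f) /\
  (forall a b a' b' a'' b'' (f : Hom D a b) (f' : Hom D a' b') (f'' : Hom D a'' b''),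
      castH (catA a a' a'') (catA b b' b'') (tens f (tens f' f''))
      = tens (tens f f') f'') /\
  (forall a b a' b' (k : CC) (f g : Hom D a b) (h : Hom D a' b'),
      tens (k *: f + g) h = k *: tens f h + tens g h) /\
  (forall a b a' b' (k : CC) (h : Hom D a b) (f g : Hom D a' b'),
      tens h (k *: f + g) = k *: tens h f + tens h g) /\
  (forall a b, cmp (brdinv D a b) (brd D a b) = idm D (a ++ b)) /\
  (forall a b, cmp (brd D a b) (brdinv D a b) = idm D (b ++ a)) /\
  (forall a b a' b' (f : Hom D a b) (g : Hom D a' b'),
      cmp (brd D b b') (tens f g) = cmp (tens g f) (brd D a a')) /\
  (forall a b d,
      brd D a (b ++ d) =
      castH erefl (catA b d a)
        (cmp (tens (idm D b) (brd D a d))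
              (castH (esym (catA a b d)) (esym (catA b a d)) (tens (brd D a b) (idm D d))))) /\
  (forall a b d,
      brd D (a ++ b) d =
      castH erefl (esym (catA d a b))
        (cmp (tens (brd D a d) (idm D b))
              (castH (catA a b d) (catA a d b) (tens (idm D a) (brd D b d))))) /\
  cmp (tens (idm D [:: true]) (ev_bw D)) (tens (coev_wb D) (idm D [:: true])) = idm D [:: true] /\
  cmp (tens (ev_bw D) (idm D [:: false])) (tens (idm D [:: false]) (coev_wb D)) = idm D [:: false] /\
  cmp (tens (ev_wb D) (idm D [:: true])) (tens (idm D [:: true]) (coev_bw D)) = idm D [:: true] /\
  cmp (tens (idm D [:: false]) (ev_wb D)) (tens (coev_bw D) (idm D [:: false])) = idm D [:: false].

Definition B_relations (D : BData) (alpha beta kappa kappa' : CC) : Prop :=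
  let theta := alpha * beta * kappa * kappa' in
  cmp (brd D [:: true] [:: true]) (brd D [:: true] [:: true])
    = (- (alpha * beta)) *: idm D [:: true; true]
      + (alpha + beta) *: brd D [:: true] [:: true] /\
  cmp (brd D [:: true] [:: false]) (coev_wb D) = kappa *: (coev_bw D) /\
  cmp (brd D [:: false] [:: true]) (coev_bw D) = kappa' *: (coev_wb D) /\
  cmp (ev_wb D) (coev_wb D) = ((theta + 1) / (kappa' * (alpha + beta))) *: idm D [::] /\
  cmp (ev_bw D) (coev_bw D) = ((theta + 1) / (kappa * (alpha + beta))) *: idm D [::].

(* A model of B: a category satisfying all of the above.  B itself is the
   initial (free) such category. *)
Definition isB (D : BData) (alpha beta kappa kappa' : CC) : Prop :=
  braided_rigid_axioms D /\ B_relations D alpha beta kappa kappa'.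

Definition Rbax (D : BData) (alpha beta u v : CC) (a b : bool) (z : CC)
    : Hom D [:: a; b] [:: b; a] :=
  brd D [:: a] [:: b] +
  match a as a0, b as b0 return Hom D [:: a0; b0] [:: b0; a0] with
  | true, true   => ((alpha + beta) / (z - 1)) *: idm D [:: true; true]
  | false, false => ((alpha + beta) / (z - 1)) *: idm D [:: false; false]
  | false, true  => ((alpha + beta) / (alpha * beta) * (u / (z - u)))
                      *: cmp (coev_wb D) (ev_bw D)
  | true, false  => ((alpha + beta) / (alpha * beta) * (v / (z - v)))
                      *: cmp (coev_bw D) (ev_wb D)
  end.

Definition Rpole (u v : CC) (a b : bool) : CC :=
  if a == b then 1 else if a then v else u.

(* Expanding both sides by bilinearity, the terms made of braidings only agree
   by the braid relation; every other term is simplified using the naturality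
   of the braiding with respect to caps and cups, the snake identities and the
   Hecke relation, in the form c^-1 = (s/t) 1 - t^-1 c with s = alpha + beta and
   t = alpha beta.  The crossings involving X^* are mates (partial transposes
   along X) of crossings of X, which transports the skein relation to
   c_{X,X^*}^-1 and the Hecke relation to X^*.  After these reductions both
   sides are combinations of the same six diagrams with coefficients that agree
   as rational functions of z and w; the hypothesis uv = -theta is used only for
   the alternating patterns X X^* X and X^* X X^*. *)

From Pilot Require Import Defs.
From HB Require Import structures.
From mathcomp Require Import all_boot all_algebra.
From mathcomp Require Import complex Rstruct.
From mathcomp Require Import ring.
(* [Hom] must denote the morphisms of [Defs], not those of [vector]. *)
Import Defs.
Set Implicit Arguments. Unset Strict Implicit. Unset Printing Implicit Defensive.
Import GRing.Theory.
Local Open Scope ring_scope.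

Section LinearCombinations.
Variables (R : pzRingType) (V : lmodType R).

Inductive linexpr := LinVar of nat | LinAdd of linexpr & linexpr
  | LinScale of R & linexpr | LinZero.

Fixpoint linexpr_eval (vs : seq V) (x : linexpr) : V :=
  match x with
  | LinVar j => nth 0 vs j
  | LinAdd x1 x2 => linexpr_eval vs x1 + linexpr_eval vs x2
  | LinScale k x1 => k *: linexpr_eval vs x1
  | LinZero => 0
  end.

Fixpoint linexpr_coef (x : linexpr) (i : nat) : R :=
  match x with
  | LinVar j => (j == i)%:R
  | LinAdd x1 x2 => linexpr_coef x1 i + linexpr_coef x2 i
  | LinScale k x1 => k * linexpr_coef x1 i
  | LinZero => 0
  end.

Lemma linexpr_evalE vs x :
  linexpr_eval vs x = \sum_(i < size vs) linexpr_coef x i *: vs`_i.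
Proof.
elim: x => [j|x1 IH1 x2 IH2|k x1 IH|] /=.
- have [ltj|lej] := ltnP j (size vs); last first.
    rewrite nth_default // big1 // => i _.
    by rewrite eqn_leq leqNgt (leq_trans (ltn_ord i) lej) scale0r.
  rewrite (bigD1 (Ordinal ltj)) //= eqxx scale1r big1 ?addr0 // => i neq_ij.
  by rewrite eq_sym -(inj_eq val_inj) /= in neq_ij; rewrite (negbTE neq_ij) scale0r.
- by rewrite IH1 IH2 -big_split; apply: eq_bigr => i _; rewrite scalerDl.
- by rewrite IH scaler_sumr; apply: eq_bigr => i _; rewrite scalerA.
- by rewrite big1 // => i _; rewrite scale0r.
Qed.

Lemma eq_linexpr_eval vs x y :
    (forall i, (i < size vs)%N -> linexpr_coef x i = linexpr_coef y i) ->
  linexpr_eval vs x = linexpr_eval vs y.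
Proof. by move=> eq_coef; rewrite !linexpr_evalE; apply: eq_bigr => i _; rewrite eq_coef. Qed.

End LinearCombinations.

Ltac linexpr_index t vs n :=
  lazymatch vs with
  | t :: _ => constr:(n)
  | _ :: ?vs' => linexpr_index t vs' (S n)
  end.

Ltac reify_linexpr t vs :=
  lazymatch t with
  | ?x + ?y =>
      let a := reify_linexpr x vs in let b := reify_linexpr y vs in constr:(LinAdd a b)
  | ?k *: ?x => let a := reify_linexpr x vs in constr:(LinScale k a)
  | 0 => open_constr:(LinZero _)
  | _ => let n := linexpr_index t vs O in open_constr:(LinVar _ n)
  end.

(* Every atom of both sides must occur in [vs]. *)
Ltac compare_coefficients vs :=
  lazymatch goal with |- ?lhs = ?rhs =>
    let x := reify_linexpr lhs vs in let y := reify_linexpr rhs vs in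
    change (linexpr_eval vs x = linexpr_eval vs y); apply: eq_linexpr_eval
  end.

Lemma scale_solve (F : fieldType) (V : lmodType F) (x y z : V) (a b : F) :
  b != 0 -> x = a *: y + b *: z -> z = (- (a / b)) *: y + b^-1 *: x.
Proof.
move=> b_neq0 ->; rewrite scalerDr !scalerA mulVf // scale1r addrA -scalerDl.
by rewrite [b^-1 * a]mulrC addNr scale0r add0r.
Qed.

Local Notation "g ∘ f" := (cmp g f) (at level 46, right associativity).
Local Notation "f ⊗ g" := (tens f g) (at level 35).

Lemma castH_id (D : BData) (a b : obj) (ea : a = a) (eb : b = b) (f : Hom D a b) :
  castH ea eb f = f.
Proof. by rewrite /castH (eq_axiomK ea) (eq_axiomK eb). Qed.

Tactic Notation "conjunct" int(n) "of" constr(H) :=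
  let ax := fresh "ax" in
  move: H; do n case=> _; case=> ax _; exact: ax.

Section BraidedRigid.
Variable D : BData.
Hypothesis HD : braided_rigid_axioms D.

Local Notation one x := (idm D [:: x]).
Local Notation cXX := (brd D [:: true] [:: true]).
Local Notation cXXs := (brd D [:: true] [:: false]).
Local Notation cXsX := (brd D [:: false] [:: true]).
Local Notation cXsXs := (brd D [:: false] [:: false]).
Local Notation cXX' := (brdinv D [:: true] [:: true]).
Local Notation cXXs' := (brdinv D [:: true] [:: false]).
Local Notation cXsXs' := (brdinv D [:: false] [:: false]).

Lemma cmp1f a b (f : Hom D a b) : idm D b ∘ f = f.
Proof. by conjunct 0 of HD. Qed.
Lemma cmpf1 a b (f : Hom D a b) : f ∘ idm D a = f.
Proof. by conjunct 1 of HD. Qed.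
Lemma cmpA a b d e (h : Hom D d e) (g : Hom D b d) (f : Hom D a b) :
  h ∘ (g ∘ f) = (h ∘ g) ∘ f.
Proof. by conjunct 2 of HD. Qed.
Lemma cmpLl a b d k (g g' : Hom D b d) (f : Hom D a b) :
  (k *: g + g') ∘ f = k *: (g ∘ f) + g' ∘ f.
Proof. by conjunct 3 of HD. Qed.
Lemma cmpLr a b d k (g : Hom D b d) (f f' : Hom D a b) :
  g ∘ (k *: f + f') = k *: (g ∘ f) + g ∘ f'.
Proof. by conjunct 4 of HD. Qed.
Lemma tens1 a b : idm D a ⊗ idm D b = idm D (a ++ b).
Proof. by conjunct 5 of HD. Qed.
Lemma tens_cmp a b d a' b' d' (g : Hom D b d) (f : Hom D a b)
    (g' : Hom D b' d') (f' : Hom D a' b') :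
  (g ∘ f) ⊗ (g' ∘ f') = (g ⊗ g') ∘ (f ⊗ f').
Proof. by conjunct 6 of HD. Qed.
Lemma tens_unitl a b (f : Hom D a b) : idm D [::] ⊗ f = f.
Proof. by conjunct 7 of HD. Qed.
Lemma tens_unitr a b (f : Hom D a b) : castH (cats0 a) (cats0 b) (f ⊗ idm D [::]) = f.
Proof. by conjunct 8 of HD. Qed.
Lemma tensA a b a' b' a'' b'' (f : Hom D a b) (f' : Hom D a' b') (f'' : Hom D a'' b'') :
  castH (catA a a' a'') (catA b b' b'') (f ⊗ (f' ⊗ f'')) = (f ⊗ f') ⊗ f''.
Proof. by conjunct 9 of HD. Qed.
Lemma tensLl a b a' b' k (f g : Hom D a b) (h : Hom D a' b') :
  (k *: f + g) ⊗ h = k *: (f ⊗ h) + g ⊗ h.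
Proof. by conjunct 10 of HD. Qed.
Lemma tensLr a b a' b' k (h : Hom D a b) (f g : Hom D a' b') :
  h ⊗ (k *: f + g) = k *: (h ⊗ f) + h ⊗ g.
Proof. by conjunct 11 of HD. Qed.
Lemma brdK a b : brdinv D a b ∘ brd D a b = idm D (a ++ b).
Proof. by conjunct 12 of HD. Qed.
Lemma brdKV a b : brd D a b ∘ brdinv D a b = idm D (b ++ a).
Proof. by conjunct 13 of HD. Qed.
Lemma brd_natural a b a' b' (f : Hom D a b) (g : Hom D a' b') :
  brd D b b' ∘ (f ⊗ g) = (g ⊗ f) ∘ brd D a a'.
Proof. by conjunct 14 of HD. Qed.
Lemma brd_hexL a b d :
  brd D a (b ++ d) =
  castH erefl (catA b d a)
    ((idm D b ⊗ brd D a d)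
     ∘ castH (esym (catA a b d)) (esym (catA b a d)) (brd D a b ⊗ idm D d)).
Proof. by conjunct 15 of HD. Qed.
Lemma brd_hexR a b d :
  brd D (a ++ b) d =
  castH erefl (esym (catA d a b))
    ((brd D a d ⊗ idm D b)
     ∘ castH (catA a b d) (catA a d b) (idm D a ⊗ brd D b d)).
Proof. by conjunct 16 of HD. Qed.
Lemma snakeX_wb : (one true ⊗ ev_bw D) ∘ (coev_wb D ⊗ one true) = one true.
Proof. by conjunct 17 of HD. Qed.
Lemma snakeXs_wb : (ev_bw D ⊗ one false) ∘ (one false ⊗ coev_wb D) = one false.
Proof. by conjunct 18 of HD. Qed.
Lemma snakeX_bw : (ev_wb D ⊗ one true) ∘ (one true ⊗ coev_bw D) = one true.
Proof. by conjunct 19 of HD. Qed.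
Lemma snakeXs_bw : (one false ⊗ ev_wb D) ∘ (coev_bw D ⊗ one false) = one false.
Proof. by move: HD; do 20 case=> _. Qed.

Lemma cmpDl a b d (g g' : Hom D b d) (f : Hom D a b) : (g + g') ∘ f = g ∘ f + g' ∘ f.
Proof. by have := cmpLl 1 g g' f; rewrite !scale1r. Qed.
Lemma cmp0l a b d (f : Hom D a b) : (0 : Hom D b d) ∘ f = 0.
Proof. by apply: (addIr (0 ∘ f)); rewrite add0r -cmpDl addr0. Qed.
Lemma cmpZl a b d k (g : Hom D b d) (f : Hom D a b) : (k *: g) ∘ f = k *: (g ∘ f).
Proof. by have := cmpLl k g 0 f; rewrite !addr0 cmp0l addr0. Qed.
Lemma cmpDr a b d (g : Hom D b d) (f f' : Hom D a b) : g ∘ (f + f') = g ∘ f + g ∘ f'.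
Proof. by have := cmpLr 1 g f f'; rewrite !scale1r. Qed.
Lemma cmp0r a b d (g : Hom D b d) : g ∘ (0 : Hom D a b) = 0.
Proof. by apply: (addIr (g ∘ 0)); rewrite add0r -cmpDr addr0. Qed.
Lemma cmpZr a b d k (g : Hom D b d) (f : Hom D a b) : g ∘ (k *: f) = k *: (g ∘ f).
Proof. by have := cmpLr k g f 0; rewrite !addr0 cmp0r addr0. Qed.

Lemma tensDl a b a' b' (f g : Hom D a b) (h : Hom D a' b') : (f + g) ⊗ h = f ⊗ h + g ⊗ h.
Proof. by have := tensLl 1 f g h; rewrite !scale1r. Qed.
Lemma tens0l a b a' b' (h : Hom D a' b') : (0 : Hom D a b) ⊗ h = 0.
Proof. by apply: (addIr (0 ⊗ h)); rewrite add0r -tensDl addr0. Qed.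
Lemma tensZl a b a' b' k (f : Hom D a b) (h : Hom D a' b') : (k *: f) ⊗ h = k *: (f ⊗ h).
Proof. by have := tensLl k f 0 h; rewrite !addr0 tens0l addr0. Qed.
Lemma tensDr a b a' b' (h : Hom D a b) (f g : Hom D a' b') : h ⊗ (f + g) = h ⊗ f + h ⊗ g.
Proof. by have := tensLr 1 h f g; rewrite !scale1r. Qed.
Lemma tens0r a b a' b' (h : Hom D a b) : h ⊗ (0 : Hom D a' b') = 0.
Proof. by apply: (addIr (h ⊗ 0)); rewrite add0r -tensDr addr0. Qed.
Lemma tensZr a b a' b' k (h : Hom D a b) (f : Hom D a' b') : h ⊗ (k *: f) = k *: (h ⊗ f).
Proof. by have := tensLr k h f 0; rewrite !addr0 tens0r addr0. Qed.

Lemma tens_cmpl a b d a' (g : Hom D b d) (f : Hom D a b) :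
  (g ∘ f) ⊗ idm D a' = (g ⊗ idm D a') ∘ (f ⊗ idm D a').
Proof. by rewrite -tens_cmp cmp1f. Qed.
Lemma tens_cmpr a b d a' (g : Hom D b d) (f : Hom D a b) :
  idm D a' ⊗ (g ∘ f) = (idm D a' ⊗ g) ∘ (idm D a' ⊗ f).
Proof. by rewrite -tens_cmp cmp1f. Qed.

Lemma brd_hexL1 x y z :
  brd D [:: x] [:: y; z] = (one y ⊗ brd D [:: x] [:: z]) ∘ (brd D [:: x] [:: y] ⊗ one z).
Proof. by rewrite (brd_hexL [:: x] [:: y] [:: z]) !castH_id. Qed.
Lemma brd_hexR1 x y z :
  brd D [:: x; y] [:: z] = (brd D [:: x] [:: z] ⊗ one y) ∘ (one x ⊗ brd D [:: y] [:: z]).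
Proof. by rewrite (brd_hexR [:: x] [:: y] [:: z]) !castH_id. Qed.

Lemma tens1r x y (f : Hom D [:: x] [:: y]) : f ⊗ idm D [::] = f.
Proof. by have := tens_unitr f; rewrite castH_id. Qed.

(* The braiding with the unit object is an invertible idempotent. *)
Lemma brd_unitr x : brd D [:: x] [::] = one x.
Proof.
have idem : brd D [:: x] [::] = brd D [:: x] [::] ∘ brd D [:: x] [::].
  by have := brd_hexL [:: x] [::] [::]; rewrite !castH_id tens_unitl tens1r.
by rewrite -[RHS](brdK [:: x] [::]) [in RHS]idem cmpA brdK cmp1f.
Qed.
Lemma brd_unitl x : brd D [::] [:: x] = one x.
Proof.
have idem : brd D [::] [:: x] = brd D [::] [:: x] ∘ brd D [::] [:: x].
  by have := brd_hexR [::] [::] [:: x]; rewrite !castH_id tens_unitl tens1r.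
by rewrite -[RHS](brdK [::] [:: x]) [in RHS]idem cmpA brdK cmp1f.
Qed.

Lemma brd_capl x y z (ev : Hom D [:: x; y] [::]) :
  ev ⊗ one z = (one z ⊗ ev) ∘ (brd D [:: x] [:: z] ⊗ one y) ∘ (one x ⊗ brd D [:: y] [:: z]).
Proof. by have := brd_natural ev (one z); rewrite brd_unitl cmp1f brd_hexR1. Qed.
Lemma brd_capr x y z (ev : Hom D [:: x; y] [::]) :
  one z ⊗ ev = (ev ⊗ one z) ∘ (one x ⊗ brd D [:: z] [:: y]) ∘ (brd D [:: z] [:: x] ⊗ one y).
Proof. by have := brd_natural (one z) ev; rewrite brd_unitr cmp1f brd_hexL1. Qed.
Lemma brd_cupl x y z (co : Hom D [::] [:: x; y]) :
  (brd D [:: x] [:: z] ⊗ one y) ∘ (one x ⊗ brd D [:: y] [:: z]) ∘ (co ⊗ one z) = one z ⊗ co.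
Proof. by have := brd_natural co (one z); rewrite brd_unitl cmpf1 brd_hexR1 -cmpA. Qed.
Lemma brd_cupr x y z (co : Hom D [::] [:: x; y]) :
  (one x ⊗ brd D [:: z] [:: y]) ∘ (brd D [:: z] [:: x] ⊗ one y) ∘ (one z ⊗ co) = co ⊗ one z.
Proof. by have := brd_natural (one z) co; rewrite brd_unitr cmpf1 brd_hexL1 -cmpA. Qed.

Lemma braid_relation x y z :
  (brd D [:: y] [:: z] ⊗ one x) ∘ (one y ⊗ brd D [:: x] [:: z]) ∘ (brd D [:: x] [:: y] ⊗ one z) =
  (one z ⊗ brd D [:: x] [:: y]) ∘ (brd D [:: x] [:: z] ⊗ one y) ∘ (one x ⊗ brd D [:: y] [:: z]).
Proof.
have := brd_natural (one x) (brd D [:: y] [:: z]); rewrite !brd_hexL1 => nat_x.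
by rewrite [RHS]cmpA nat_x.
Qed.

(* [rewrite -tens_cmp] and [rewrite -tensA] cannot infer the object indices. *)
Ltac fold_tens_cmp :=
  match goal with |- context [(?g ⊗ ?g') ∘ (?f ⊗ ?f')] => rewrite -(tens_cmp g f g' f') end.
Ltac unfold_tensA :=
  match goal with |- context [(?f ⊗ ?f') ⊗ ?f''] => rewrite -(tensA f f' f'') castH_id end.

Lemma brdK_idl c a b : (idm D c ⊗ brdinv D a b) ∘ (idm D c ⊗ brd D a b) = idm D (c ++ (a ++ b)).
Proof. by rewrite -tens_cmpr brdK tens1. Qed.
Lemma brdKV_idl c a b : (idm D c ⊗ brd D a b) ∘ (idm D c ⊗ brdinv D a b) = idm D (c ++ (b ++ a)).
Proof. by rewrite -tens_cmpr brdKV tens1. Qed.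
Lemma brdK_idr c a b : (brdinv D a b ⊗ idm D c) ∘ (brd D a b ⊗ idm D c) = idm D ((a ++ b) ++ c).
Proof. by rewrite -tens_cmpl brdK tens1. Qed.
Lemma brdKV_idr c a b : (brd D a b ⊗ idm D c) ∘ (brdinv D a b ⊗ idm D c) = idm D ((b ++ a) ++ c).
Proof. by rewrite -tens_cmpl brdKV tens1. Qed.

Lemma cup_slidel x y z (co : Hom D [::] [:: x; y]) :
  (one x ⊗ brd D [:: y] [:: z]) ∘ (co ⊗ one z) = (brdinv D [:: x] [:: z] ⊗ one y) ∘ (one z ⊗ co).
Proof. by rewrite -(brd_cupl z co) !cmpA brdK_idr cmp1f. Qed.
Lemma cup_slider x y z (co : Hom D [::] [:: x; y]) :
  (brd D [:: z] [:: x] ⊗ one y) ∘ (one z ⊗ co) = (one x ⊗ brdinv D [:: z] [:: y]) ∘ (co ⊗ one z).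
Proof. by rewrite -(brd_cupr z co) !cmpA brdK_idl cmp1f. Qed.
Lemma cap_slidel x y z (ev : Hom D [:: x; y] [::]) :
  (one z ⊗ ev) ∘ (brd D [:: x] [:: z] ⊗ one y) = (ev ⊗ one z) ∘ (one x ⊗ brdinv D [:: y] [:: z]).
Proof. by rewrite [ev ⊗ one z]brd_capl -!cmpA brdKV_idl cmpf1. Qed.
Lemma cap_slider x y z (ev : Hom D [:: x; y] [::]) :
  (ev ⊗ one z) ∘ (one x ⊗ brd D [:: z] [:: y]) = (one z ⊗ ev) ∘ (brdinv D [:: z] [:: x] ⊗ one y).
Proof. by rewrite [one z ⊗ ev]brd_capr -!cmpA brdKV_idr cmpf1. Qed.

Definition mate Y (y : Hom D [:: Y; true] [:: true; Y]) : Hom D [:: false; Y] [:: Y; false] :=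
  ((ev_bw D ⊗ one Y) ⊗ one false) ∘ ((one false ⊗ y) ⊗ one false)
  ∘ (idm D [:: false; Y] ⊗ coev_wb D).

Lemma mate_unique Y (x : Hom D [:: false; Y] [:: Y; false]) (y : Hom D [:: Y; true] [:: true; Y]) :
  (one Y ⊗ ev_bw D) ∘ (x ⊗ one true) = (ev_bw D ⊗ one Y) ∘ (one false ⊗ y) -> x = mate y.
Proof.
move=> ev_x.
have slide_x : ((x ⊗ one true) ⊗ one false) ∘ (idm D [:: false; Y] ⊗ coev_wb D)
               = (idm D [:: Y; false] ⊗ coev_wb D) ∘ x.
  unfold_tensA; rewrite tens1; fold_tens_cmp; rewrite cmp1f cmpf1.
  have x1 := tens_unitr x; rewrite castH_id in x1.
  by rewrite -[in RHS]x1; fold_tens_cmp; rewrite cmp1f cmpf1.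
have snake : ((one Y ⊗ ev_bw D) ⊗ one false) ∘ (idm D [:: Y; false] ⊗ coev_wb D)
             = idm D [:: Y; false].
  unfold_tensA; rewrite -(tens1 [:: Y] [:: false]); unfold_tensA.
  by fold_tens_cmp; rewrite cmp1f snakeXs_wb tens1.
rewrite /mate cmpA; fold_tens_cmp.
by rewrite cmp1f -ev_x tens_cmpl -cmpA slide_x cmpA snake cmp1f.
Qed.

Lemma mateD Y (y y' : Hom D [:: Y; true] [:: true; Y]) : mate (y + y') = mate y + mate y'.
Proof. by rewrite /mate tensDr tensDl cmpDl cmpDr. Qed.
Lemma mateZ Y k (y : Hom D [:: Y; true] [:: true; Y]) : mate (k *: y) = k *: mate y.
Proof. by rewrite /mate tensZr tensZl cmpZl cmpZr. Qed.

Lemma mate1 : mate (idm D [:: true; true]) = coev_wb D ∘ ev_bw D.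
Proof.
by symmetry; apply: mate_unique; rewrite tens_cmpl cmpA snakeX_wb cmp1f tens1 cmpf1.
Qed.
Lemma mate_coev_ev : mate (coev_wb D ∘ ev_bw D) = idm D [:: false; false].
Proof.
by symmetry; apply: mate_unique; rewrite tens1 cmpf1 tens_cmpr cmpA snakeXs_wb cmp1f.
Qed.

Lemma cXsX_mate : cXsX = mate cXX'.
Proof. by apply: mate_unique; apply: cap_slidel. Qed.
Lemma cXXs'_mate : cXXs' = mate cXX.
Proof. by apply: mate_unique; symmetry; apply: cap_slider. Qed.
Lemma cXsXs_mate : cXsXs = mate cXXs'.
Proof. by apply: mate_unique; apply: cap_slidel. Qed.
Lemma cXsXs'_mate : cXsXs' = mate cXsX.
Proof. by apply: mate_unique; symmetry; apply: cap_slider. Qed.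

Lemma tens1r_cap x y (g : Hom D [:: x; y] [::]) : g ⊗ idm D [::] = g.
Proof. by have := tens_unitr g; rewrite castH_id. Qed.

Lemma cap_interchange x y x' y' (g : Hom D [:: x; y] [::]) (h : Hom D [:: x'; y'] [::]) :
  h ∘ (g ⊗ idm D [:: x'; y']) = g ∘ (idm D [:: x; y] ⊗ h).
Proof.
transitivity (g ⊗ h); first by rewrite -[in RHS](cmp1f g) -[in RHS](cmpf1 h) tens_cmp tens_unitl.
by rewrite -[in LHS](cmpf1 g) -[in LHS](cmp1f h) tens_cmp tens1r_cap.
Qed.

Lemma ev_bw_unbend (g : Hom D [:: false; true] [::]) :
  ev_bw D ∘ (((g ⊗ one false) ∘ (one false ⊗ coev_wb D)) ⊗ one true) = g.
Proof.
rewrite tens_cmpl; do 2 unfold_tensA; rewrite tens1 cmpA cap_interchange -cmpA.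
rewrite -(tens1 [:: false] [:: true]); unfold_tensA; fold_tens_cmp.
by rewrite cmp1f snakeX_wb tens1 cmpf1.
Qed.
Lemma ev_wb_unbend (g : Hom D [:: true; false] [::]) :
  ev_wb D ∘ (((g ⊗ one true) ∘ (one true ⊗ coev_bw D)) ⊗ one false) = g.
Proof.
rewrite tens_cmpl; do 2 unfold_tensA; rewrite tens1 cmpA cap_interchange -cmpA.
rewrite -(tens1 [:: true] [:: false]); unfold_tensA; fold_tens_cmp.
by rewrite cmp1f snakeXs_bw tens1 cmpf1.
Qed.

Lemma cmp_tens1l c a b d (g : Hom D b d) (f : Hom D a b) (h : Hom D a d) :
  g ∘ f = h -> (idm D c ⊗ g) ∘ (idm D c ⊗ f) = idm D c ⊗ h.
Proof. by move=> <-; rewrite tens_cmpr. Qed.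
Lemma cmp_tens1r c a b d (g : Hom D b d) (f : Hom D a b) (h : Hom D a d) :
  g ∘ f = h -> (g ⊗ idm D c) ∘ (f ⊗ idm D c) = h ⊗ idm D c.
Proof. by move=> <-; rewrite tens_cmpl. Qed.

Lemma cmp_chain2 a b c d (h : Hom D c d) (g : Hom D b c) (k : Hom D b d) (f : Hom D a b) :
  h ∘ g = k -> h ∘ (g ∘ f) = k ∘ f.
Proof. by move=> hg; rewrite cmpA hg. Qed.
Lemma cmp_chain3 a b b' c d (h : Hom D c d) (g : Hom D b' c) (g' : Hom D b b')
    (k : Hom D b d) (f : Hom D a b) :
  h ∘ (g ∘ g') = k -> h ∘ (g ∘ (g' ∘ f)) = k ∘ f.
Proof. by move=> hgg'; rewrite !cmpA -(cmpA h) hgg'. Qed.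

Ltac rewrite_chain E := rewrite ?(cmp_chain2 _ E) ?E.
Ltac rewrite_chain3 E := rewrite ?(cmp_chain3 _ E) ?E.
Ltac expand_linear := rewrite ?(tensDl, tensDr, tensZl, tensZr, cmpDl, cmpDr, cmpZl, cmpZr).

Section Relations.
Variables alpha beta kappa kappa' : CC.
Hypothesis HR : B_relations D alpha beta kappa kappa'.
Hypotheses (alpha_neq0 : alpha != 0) (beta_neq0 : beta != 0).
Hypotheses (kappa_neq0 : kappa != 0) (kappa'_neq0 : kappa' != 0).
Hypothesis sum_neq0 : alpha + beta != 0.

Local Notation s := (alpha + beta).
Local Notation t := (alpha * beta).
Local Notation theta := (alpha * beta * kappa * kappa').

Lemma hecke_cXX : cXX ∘ cXX = (- t) *: idm D [:: true; true] + s *: cXX.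
Proof. by case: HR. Qed.
Lemma cXXs_coev_wb : cXXs ∘ coev_wb D = kappa *: coev_bw D.
Proof. by case: HR => _ []. Qed.
Lemma cXsX_coev_bw : cXsX ∘ coev_bw D = kappa' *: coev_wb D.
Proof. by case: HR => _ [_ []]. Qed.
Lemma ev_coev_wb : ev_wb D ∘ coev_wb D = ((theta + 1) / (kappa' * s)) *: idm D [::].
Proof. by case: HR => _ [_ [_ []]]. Qed.
Lemma ev_coev_bw : ev_bw D ∘ coev_bw D = ((theta + 1) / (kappa * s)) *: idm D [::].
Proof. by case: HR => _ [_ [_ [_ ]]]. Qed.

Lemma cXX_skein : cXX = s *: idm D [:: true; true] + (- t) *: cXX'.
Proof.
have := congr1 (cmp cXX') hecke_cXX; rewrite cmpA brdK cmp1f => ->.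
by rewrite cmpDr !cmpZr brdK cmpf1 addrC.
Qed.

Lemma t_neq0 : t != 0. Proof. by rewrite mulf_neq0. Qed.

Lemma cXX'_hecke : cXX' = (s / t) *: idm D [:: true; true] + (- t^-1) *: cXX.
Proof.
rewrite {1}(scale_solve _ cXX_skein) ?oppr_eq0 ?t_neq0 //.
by rewrite invrN mulrN opprK.
Qed.

Lemma cXXs'_skein : cXXs' = s *: (coev_wb D ∘ ev_bw D) + (- t) *: cXsX.
Proof. by rewrite cXXs'_mate cXX_skein mateD !mateZ mate1 cXsX_mate. Qed.

Lemma cXsXs_skein : cXsXs = s *: idm D [:: false; false] + (- t) *: cXsXs'.
Proof. by rewrite {1}cXsXs_mate cXXs'_skein mateD !mateZ mate_coev_ev cXsXs'_mate. Qed.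

Lemma cXsXs'_hecke : cXsXs' = (s / t) *: idm D [:: false; false] + (- t^-1) *: cXsXs.
Proof.
rewrite {1}(scale_solve _ cXsXs_skein) ?oppr_eq0 ?t_neq0 //.
by rewrite invrN mulrN opprK.
Qed.

Lemma ev_wb_cXsX : ev_wb D ∘ cXsX = kappa *: ev_bw D.
Proof.
rewrite -(ev_bw_unbend (ev_wb D ∘ cXsX)) -[RHS](ev_bw_unbend (kappa *: ev_bw D)).
apply: (congr1 (fun h : Hom D [:: false] [:: false] => ev_bw D ∘ (h ⊗ one true))).
rewrite tensZl cmpZl snakeXs_wb tens_cmpl -cmpA cup_slider cmpA -cap_slidel -cmpA.
by fold_tens_cmp; rewrite cmp1f cXXs_coev_wb tensZl cmpZr snakeXs_bw.
Qed.

Lemma ev_bw_cXXs : ev_bw D ∘ cXXs = kappa' *: ev_wb D.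
Proof.
rewrite -(ev_wb_unbend (ev_bw D ∘ cXXs)) -[RHS](ev_wb_unbend (kappa' *: ev_wb D)).
apply: (congr1 (fun h : Hom D [:: true] [:: true] => ev_wb D ∘ (h ⊗ one false))).
rewrite tensZl cmpZl snakeX_bw tens_cmpl -cmpA cup_slider cmpA -cap_slidel -cmpA.
by fold_tens_cmp; rewrite cmp1f cXsX_coev_bw tensZl cmpZr snakeX_wb.
Qed.

Lemma cXsX_cXXs :
  cXsX ∘ cXXs = (s * kappa' / t) *: (coev_wb D ∘ ev_wb D) + (- t^-1) *: idm D [:: true; false].
Proof.
have skein := congr1 (fun h => h ∘ cXXs) cXXs'_skein.
rewrite brdK cmpDl !cmpZl -cmpA ev_bw_cXXs cmpZr scalerA in skein.
rewrite (scale_solve _ skein) ?oppr_eq0 ?t_neq0 //.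
by rewrite invrN mulrN opprK mulrAC.
Qed.

Lemma cXXs_cXsX :
  cXXs ∘ cXsX = (s * kappa / t) *: (coev_bw D ∘ ev_bw D) + (- t^-1) *: idm D [:: false; true].
Proof.
have skein := congr1 (fun h => cXXs ∘ h) cXXs'_skein.
rewrite brdKV cmpDr !cmpZr cmpA cXXs_coev_wb cmpZl scalerA in skein.
rewrite (scale_solve _ skein) ?oppr_eq0 ?t_neq0 //.
by rewrite invrN mulrN opprK mulrAC.
Qed.

Lemma curl_ev_bw_cXX :
  (ev_bw D ⊗ one true) ∘ (one false ⊗ cXX) ∘ (coev_bw D ⊗ one true) = kappa^-1 *: one true.
Proof.
rewrite cXX_skein tensDr !tensZr cmpDl !cmpZl cmpDr !cmpZr tens1 cmp1f.
fold_tens_cmp; rewrite cmp1f ev_coev_bw tensZl tens_unitl.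
rewrite cmpA -cap_slidel -cmpA; fold_tens_cmp.
rewrite cmp1f cXsX_coev_bw tensZl cmpZr snakeX_wb.
by rewrite !scalerA -scalerDl; congr (_ *: _); field; rewrite kappa_neq0 sum_neq0.
Qed.

Lemma curl_ev_wb_cXX :
  (one true ⊗ ev_wb D) ∘ (cXX ⊗ one false) ∘ (one true ⊗ coev_wb D) = kappa'^-1 *: one true.
Proof.
rewrite cXX_skein tensDl !tensZl cmpDl !cmpZl cmpDr !cmpZr tens1 cmp1f.
fold_tens_cmp; rewrite cmp1f ev_coev_wb tensZr tens1r.
rewrite cmpA -cap_slider -cmpA; fold_tens_cmp.
rewrite cmp1f cXXs_coev_wb tensZr cmpZr snakeX_bw.
by rewrite !scalerA -scalerDl; congr (_ *: _); field; rewrite kappa'_neq0 sum_neq0.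
Qed.

Lemma curl_ev_wb_cXsXs :
  (ev_wb D ⊗ one false) ∘ (one true ⊗ cXsXs) ∘ (coev_wb D ⊗ one false) = kappa'^-1 *: one false.
Proof.
rewrite cXsXs_skein tensDr !tensZr cmpDl !cmpZl cmpDr !cmpZr tens1 cmp1f.
fold_tens_cmp; rewrite cmp1f ev_coev_wb tensZl tens_unitl.
rewrite cmpA -cap_slidel -cmpA; fold_tens_cmp.
rewrite cmp1f cXXs_coev_wb tensZl cmpZr snakeXs_bw.
by rewrite !scalerA -scalerDl; congr (_ *: _); field; rewrite kappa'_neq0 sum_neq0.
Qed.

Lemma curl_ev_bw_cXsXs :
  (one false ⊗ ev_bw D) ∘ (cXsXs ⊗ one true) ∘ (one false ⊗ coev_bw D) = kappa^-1 *: one false.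
Proof.
rewrite cXsXs_skein tensDl !tensZl cmpDl !cmpZl cmpDr !cmpZr tens1 cmp1f.
fold_tens_cmp; rewrite cmp1f ev_coev_bw tensZr tens1r.
rewrite cmpA -cap_slider -cmpA; fold_tens_cmp.
rewrite cmp1f cXsX_coev_bw tensZr cmpZr snakeXs_wb.
by rewrite !scalerA -scalerDl; congr (_ *: _); field; rewrite kappa_neq0 sum_neq0.
Qed.

Section Baxterization.
Variables u v : CC.
Hypothesis uv_theta : u * v = - theta.

Local Notation R := (Rbax D alpha beta u v).

Definition yang_baxter a b c z w :=
  (R b c w ⊗ one a) ∘ (one b ⊗ R a c (z * w)) ∘ (R a b z ⊗ one c) =
  (one c ⊗ R a b z) ∘ (R a c (z * w) ⊗ one b) ∘ (one a ⊗ R b c w).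

Ltac expand_yang_baxter :=
  rewrite /yang_baxter /Rbax /=; expand_linear;
  rewrite !tens1 ?cmp1f ?cmpf1 !tens_cmpl !tens_cmpr -!cmpA -braid_relation.

Ltac coefficients_agree :=
  case=> [|[|[|[|[|[|i]]]]]] //= _; field;
  rewrite ?subr_eq0; repeat (apply/andP; split); assumption.

Lemma yang_baxter_XXXs z w : z != 1 -> w != v -> z * w != v -> yang_baxter true true false z w.
Proof.
move=> z_neq1 w_neqv zw_neqv; expand_yang_baxter.
rewrite_chain (cup_slider true (coev_bw D)); rewrite_chain (cap_slider true (ev_wb D)).
rewrite_chain snakeX_bw; rewrite -?cmpA.
rewrite_chain (brdKV_idl [:: false] [:: true] [:: true]).
rewrite_chain (brdK_idr [:: false] [:: true] [:: true]).
rewrite ?cmp1f ?cmpf1 cXX'_hecke; expand_linear; rewrite ?tens1 ?cmp1f ?cmpf1.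
set ccc := (cXXs ⊗ one true ∘ one true ⊗ cXXs ∘ cXX ⊗ one false).
set cc := (cXXs ⊗ one true ∘ one true ⊗ cXXs).
set ec := (coev_bw D ⊗ one true ∘ one true ⊗ ev_wb D ∘ cXX ⊗ one false).
set cec := (one false ⊗ cXX ∘ coev_bw D ⊗ one true ∘ one true ⊗ ev_wb D ∘ cXX ⊗ one false).
set e := (coev_bw D ⊗ one true ∘ one true ⊗ ev_wb D).
set ce := (one false ⊗ cXX ∘ e).
compare_coefficients [:: ccc; cc; e; ec; ce; cec].
coefficients_agree.
Qed.

Lemma yang_baxter_XsXX z w : z != u -> w != 1 -> z * w != u -> yang_baxter false true true z w.
Proof.
move=> z_nequ w_neq1 zw_nequ; expand_yang_baxter.
rewrite_chain (cup_slidel true (coev_wb D)); rewrite_chain (cap_slidel true (ev_bw D)).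
rewrite_chain snakeX_wb; rewrite -?cmpA.
rewrite_chain (brdKV_idr [:: false] [:: true] [:: true]).
rewrite_chain (brdK_idl [:: false] [:: true] [:: true]).
rewrite ?cmp1f ?cmpf1 cXX'_hecke; expand_linear; rewrite ?tens1 ?cmp1f ?cmpf1.
set ccc := (cXX ⊗ one false ∘ one true ⊗ cXsX ∘ cXsX ⊗ one true).
set cc := (one true ⊗ cXsX ∘ cXsX ⊗ one true).
set ec := (one true ⊗ coev_wb D ∘ ev_bw D ⊗ one true ∘ one false ⊗ cXX).
set cec := (cXX ⊗ one false ∘ one true ⊗ coev_wb D ∘ ev_bw D ⊗ one true ∘ one false ⊗ cXX).
set e := (one true ⊗ coev_wb D ∘ ev_bw D ⊗ one true).
set ce := (cXX ⊗ one false ∘ e).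
compare_coefficients [:: ccc; cc; e; ec; ce; cec].
coefficients_agree.
Qed.

Lemma yang_baxter_XsXsX z w : z != 1 -> w != u -> z * w != u -> yang_baxter false false true z w.
Proof.
move=> z_neq1 w_nequ zw_nequ; expand_yang_baxter.
rewrite_chain (cap_slider false (ev_bw D)); rewrite_chain (cup_slider false (coev_wb D)).
rewrite_chain snakeXs_wb; rewrite -?cmpA.
rewrite_chain (brdKV_idl [:: true] [:: false] [:: false]).
rewrite_chain (brdK_idr [:: true] [:: false] [:: false]).
rewrite ?cmp1f ?cmpf1 cXsXs'_hecke; expand_linear; rewrite ?tens1 ?cmp1f ?cmpf1.
set ccc := (cXsX ⊗ one false ∘ one false ⊗ cXsX ∘ cXsXs ⊗ one true).
set cc := (cXsX ⊗ one false ∘ one false ⊗ cXsX).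
set ec := (coev_wb D ⊗ one false ∘ one false ⊗ ev_bw D ∘ cXsXs ⊗ one true).
set cec := (one true ⊗ cXsXs ∘ coev_wb D ⊗ one false ∘ one false ⊗ ev_bw D ∘ cXsXs ⊗ one true).
set e := (coev_wb D ⊗ one false ∘ one false ⊗ ev_bw D).
set ce := (one true ⊗ cXsXs ∘ e).
compare_coefficients [:: ccc; cc; e; ec; ce; cec].
coefficients_agree.
Qed.

Lemma yang_baxter_XXsXs z w : z != v -> w != 1 -> z * w != v -> yang_baxter true false false z w.
Proof.
move=> z_neqv w_neq1 zw_neqv; expand_yang_baxter.
rewrite_chain (cup_slidel false (coev_bw D)); rewrite_chain (cap_slidel false (ev_wb D)).
rewrite_chain snakeXs_bw; rewrite -?cmpA.
rewrite_chain (brdKV_idr [:: true] [:: false] [:: false]).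
rewrite_chain (brdK_idl [:: true] [:: false] [:: false]).
rewrite ?cmp1f ?cmpf1 cXsXs'_hecke; expand_linear; rewrite ?tens1 ?cmp1f ?cmpf1.
set ccc := (cXsXs ⊗ one true ∘ one false ⊗ cXXs ∘ cXXs ⊗ one false).
set cc := (one false ⊗ cXXs ∘ cXXs ⊗ one false).
set ec := (one false ⊗ coev_bw D ∘ ev_wb D ⊗ one false ∘ one true ⊗ cXsXs).
set cec := (cXsXs ⊗ one true ∘ one false ⊗ coev_bw D ∘ ev_wb D ⊗ one false ∘ one true ⊗ cXsXs).
set e := (one false ⊗ coev_bw D ∘ ev_wb D ⊗ one false).
set ce := (cXsXs ⊗ one true ∘ e).
compare_coefficients [:: ccc; cc; e; ec; ce; cec].
coefficients_agree.
Qed.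

Lemma u_neq0 : u != 0.
Proof.
apply/eqP => u0; have : theta != 0 by rewrite !mulf_neq0.
by rewrite -oppr_eq0 -uv_theta u0 mul0r eqxx.
Qed.

Lemma v_theta : v = - theta / u.
Proof. by rewrite -uv_theta mulrC mulKf ?u_neq0. Qed.

Lemma yang_baxter_XXsX z w : z != v -> w != u -> z * w != 1 -> yang_baxter true false true z w.
Proof.
move=> z_neqv w_nequ zw_neq1; expand_yang_baxter.
rewrite_chain3 (brd_cupl true (coev_bw D)); rewrite_chain3 (esym (brd_capr true (ev_bw D))).
rewrite_chain3 (brd_cupr true (coev_wb D)); rewrite_chain3 (esym (brd_capl true (ev_wb D))).
rewrite_chain3 curl_ev_bw_cXX; rewrite_chain3 curl_ev_wb_cXX.
expand_linear; rewrite ?cmp1f ?cmpf1 -?cmpA.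
rewrite_chain (cmp_tens1r [:: true] cXsX_cXXs); rewrite_chain (cmp_tens1r [:: true] cXsX_coev_bw).
rewrite_chain (cmp_tens1r [:: true] ev_bw_cXXs); rewrite_chain (cmp_tens1r [:: true] ev_coev_bw).
rewrite_chain (cmp_tens1l [:: true] cXXs_cXsX); rewrite_chain (cmp_tens1l [:: true] cXXs_coev_wb).
rewrite_chain (cmp_tens1l [:: true] ev_wb_cXsX); rewrite_chain (cmp_tens1l [:: true] ev_coev_wb).
expand_linear; rewrite ?tens1 ?tens_unitl ?tens1r ?tens_cmpl ?tens_cmpr ?cmp1f ?cmpf1 -?cmpA.
set ccc := (cXsX ⊗ one true ∘ one false ⊗ cXX ∘ cXXs ⊗ one true).
set id3 := idm D [:: true; false; true].
set cupcap_l := (coev_wb D ⊗ one true ∘ ev_wb D ⊗ one true).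
set cupcap_r := (one true ⊗ coev_bw D ∘ one true ⊗ ev_bw D).
set cupcap_lr := (one true ⊗ coev_bw D ∘ ev_wb D ⊗ one true).
set cupcap_rl := (coev_wb D ⊗ one true ∘ one true ⊗ ev_bw D).
compare_coefficients [:: ccc; id3; cupcap_l; cupcap_r; cupcap_lr; cupcap_rl].
have u_neq0 := u_neq0.
have zu_neq : z * u != - theta by apply: contraNneq z_neqv => zu; rewrite v_theta -zu mulfK.
rewrite v_theta; coefficients_agree.
Qed.

Lemma yang_baxter_XsXXs z w : z != u -> w != v -> z * w != 1 -> yang_baxter false true false z w.
Proof.
move=> z_nequ w_neqv zw_neq1; expand_yang_baxter.
rewrite_chain3 (brd_cupl false (coev_wb D)); rewrite_chain3 (esym (brd_capr false (ev_wb D))).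
rewrite_chain3 (brd_cupr false (coev_bw D)); rewrite_chain3 (esym (brd_capl false (ev_bw D))).
rewrite_chain3 curl_ev_wb_cXsXs; rewrite_chain3 curl_ev_bw_cXsXs.
expand_linear; rewrite ?cmp1f ?cmpf1 -?cmpA.
rewrite_chain (cmp_tens1r [:: false] cXXs_cXsX); rewrite_chain (cmp_tens1r [:: false] cXXs_coev_wb).
rewrite_chain (cmp_tens1r [:: false] ev_wb_cXsX); rewrite_chain (cmp_tens1r [:: false] ev_coev_wb).
rewrite_chain (cmp_tens1l [:: false] cXsX_cXXs); rewrite_chain (cmp_tens1l [:: false] cXsX_coev_bw).
rewrite_chain (cmp_tens1l [:: false] ev_bw_cXXs); rewrite_chain (cmp_tens1l [:: false] ev_coev_bw).
expand_linear; rewrite ?tens1 ?tens_unitl ?tens1r ?tens_cmpl ?tens_cmpr ?cmp1f ?cmpf1 -?cmpA.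
set ccc := (cXXs ⊗ one false ∘ one true ⊗ cXsXs ∘ cXsX ⊗ one false).
set id3 := idm D [:: false; true; false].
set cupcap_l := (coev_bw D ⊗ one false ∘ ev_bw D ⊗ one false).
set cupcap_r := (one false ⊗ coev_wb D ∘ one false ⊗ ev_wb D).
set cupcap_lr := (one false ⊗ coev_wb D ∘ ev_bw D ⊗ one false).
set cupcap_rl := (coev_bw D ⊗ one false ∘ one false ⊗ ev_wb D).
compare_coefficients [:: ccc; id3; cupcap_l; cupcap_r; cupcap_lr; cupcap_rl].
have u_neq0 := u_neq0.
have wu_neq : w * u != - theta by apply: contraNneq w_neqv => wu; rewrite v_theta -wu mulfK.
rewrite v_theta; coefficients_agree.
Qed.

End Baxterization.
End Relations.

End BraidedRigid.

Theorem lemma3p1p1 (D : BData) (alpha beta kappa kappa' u v : CC) :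
  alpha != 0 -> beta != 0 -> kappa != 0 -> kappa' != 0 -> alpha + beta != 0 ->
  isB D alpha beta kappa kappa' ->
  u * v = - (alpha * beta * kappa * kappa') ->
  forall (a b c : bool), ~~ ((a == b) && (b == c)) ->
  forall z w : CC,
    z != Rpole u v a b -> w != Rpole u v b c -> z * w != Rpole u v a c ->
    cmp (tens (Rbax D alpha beta u v b c w) (idm D [:: a]))
      (cmp (tens (idm D [:: b]) (Rbax D alpha beta u v a c (z * w)))
            (tens (Rbax D alpha beta u v a b z) (idm D [:: c])))
    =
    cmp (tens (idm D [:: c]) (Rbax D alpha beta u v a b z))
      (cmp (tens (Rbax D alpha beta u v a c (z * w)) (idm D [:: b]))
            (tens (idm D [:: a]) (Rbax D alpha beta u v b c w))).
Proof.
move=> alpha_neq0 beta_neq0 kappa_neq0 kappa'_neq0 sum_neq0 [HD HR] uv_theta a b c mixed z w.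
rewrite -/(yang_baxter D alpha beta u v a b c z w).
case: a mixed; case: b; case: c => //= _; rewrite /Rpole /= => z_pole w_pole zw_pole.
- exact: (yang_baxter_XXXs HD HR).
- exact: (yang_baxter_XXsX HD HR).
- exact: (yang_baxter_XXsXs HD HR).
- exact: (yang_baxter_XsXX HD HR).
- exact: (yang_baxter_XsXXs HD HR).
- exact: (yang_baxter_XsXsX HD HR).
Qed.
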